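(* Consider the setting described in the context and suppose the stepsizes satisfy conditions (A), (B) and (C). Let $u^\star=(x^\star,y^\star)$ satisfy $0\in F(x^\star)+A^Ty^\star$ and $0\in G(y^\star)-Ax^\star$. Then there is a constant $C_L$ (possibly negative) such that the PDHG iterates satisfy $\|u_{k+1}-u^\star\|_{M_k}^2\ge C_L$ for all $k$.
   Context: Let $A\in\mathbb{R}^{M\times N}$, let $f$ and $g$ be convex functions on $\mathbb{R}^N$ and $\mathbb{R}^M$, and let $X\subset\mathbb{R}^N$, $Y\subset\mathbb{R}^M$ be convex sets; consider the saddle-point problem $\min_{x\in X}\max_{y\in Y} f(x)+y^TAx-g(y)$. Let $\chi_C$ denote the characteristic function of a set $C$ ($0$ on $C$, $+\infty$ off $C$), and let $F=\partial(f+\chi_X)$, $G=\partial(g+\chi_Y)$. It is assumed that the problem is feasible (such $u^\star$ exists) and that the minimizations below have solutions. The PDHG method with stepsizes $\tau_k,\sigma_k>0$ starts from $x_0,y_0$ and iterates $x_{k+1}=\arg\min_{x\in X} f(x)+\frac{1}{2\tau_k}\|x-(x_k-\tau_kA^Ty_k)\|^2$, $y_{k+1}=\arg\min_{y\in Y} g(y)+\frac{1}{2\sigma_k}\|y-(y_k+\sigma_kA(2x_{k+1}-x_k))\|^2$. Write $u_k=(x_k,y_k)$, $M_k=\begin{pmatrix}\tau_k^{-1}I & -A^T\\ -A & \sigma_k^{-1}I\end{pmatrix}$, $H_k=\begin{pmatrix}\tau_k^{-1}I & 0\\ 0 & \sigma_k^{-1}I\end{pmatrix}$, and for a symmetric (possibly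 indefinite) matrix $M$, $\|u\|_M^2:=u^TMu$. Let $\phi_k=\max\{(\tau_k-\tau_{k+1})/\tau_k,\ (\sigma_k-\sigma_{k+1})/\sigma_k,\ 0\}$. Conditions: (A) the sequences $\{\tau_k\}$ and $\{\sigma_k\}$ are bounded; (B) $\sum_{k\ge0}\phi_k<C_\phi<\infty$ for some constant $C_\phi$; (C) either (C1) there is a constant $L$ with $\tau_k\sigma_k<L<\rho(A^TA)^{-1}$ for all $k>0$ ($\rho$ = spectral radius), or (C2) either $X$ or $Y$ is bounded and there is $c\in(0,1)$ with $\|u_{k+1}-u_k\|_{M_k}^2\ge c\|u_{k+1}-u_k\|_{H_k}^2$ for all $k>0$. *)

From HB Require Import structures.
From mathcomp Require Import all_boot all_order all_algebra.
From mathcomp Require Import boolp classical_sets reals.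
Set Implicit Arguments. Unset Strict Implicit. Unset Printing Implicit Defensive.
Import Order.TTheory GRing.Theory Num.Theory.
Local Open Scope ring_scope.
Local Open Scope classical_set_scope.

Section PDHGDefs.
Variable R : realType.

Definition sqnorm (n : nat) (v : 'cV[R]_n) : R := \sum_i (v i 0) ^+ 2.

Definition qform (n : nat) (Mat : 'M[R]_n) (u : 'cV[R]_n) : R :=
  ((u^T *m Mat *m u) 0 0).

Definition convex_set (n : nat) (X : set 'cV[R]_n) : Prop :=
  forall x y (t : R), X x -> X y -> 0 <= t -> t <= 1 ->
    X (t *: x + (1 - t) *: y).

Definition convex_fun (n : nat) (f : 'cV[R]_n -> R) : Prop :=
  forall x y (t : R), 0 <= t -> t <= 1 ->
    f (t *: x + (1 - t) *: y) <= t * f x + (1 - t) * f y.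

Definition bounded_set (n : nat) (X : set 'cV[R]_n) : Prop :=
  exists B : R, forall x, X x -> sqnorm x <= B.

(* p \in \partial (f + chi_X)(x) : x \in X and the subgradient inequality on X
   (outside X, f + chi_X = +oo, so the inequality is trivial there). *)
Definition subdiff_ind (n : nat) (f : 'cV[R]_n -> R) (X : set 'cV[R]_n)
    (x p : 'cV[R]_n) : Prop :=
  X x /\ forall z, X z -> f x + ((p^T *m (z - x)) 0 0) <= f z.

Definition is_prox_min (n : nat) (h : 'cV[R]_n -> R) (X : set 'cV[R]_n)
    (t : R) (v x' : 'cV[R]_n) : Prop :=
  X x' /\ forall x, X x ->
    h x' + (2 * t)^-1 * sqnorm (x' - v) <= h x + (2 * t)^-1 * sqnorm (x - v).

Definition specrad (n : nat) (Mat : 'M[R]_n) : R :=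
  sup [set r : R | exists a : R, eigenvalue Mat a /\ r = `|a|].

Definition Mk (m n : nat) (A : 'M[R]_(m, n)) (tau sigma : R) : 'M[R]_(n + m) :=
  block_mx (tau^-1%:M) (- A^T) (- A) (sigma^-1%:M).

Definition Hk (m n : nat) (tau sigma : R) : 'M[R]_(n + m) :=
  block_mx (tau^-1%:M) 0 0 (sigma^-1%:M).

Definition phik (tau sigma : nat -> R) (k : nat) : R :=
  Num.max (Num.max ((tau k - tau k.+1) / tau k) ((sigma k - sigma k.+1) / sigma k)) 0.

End PDHGDefs.

(** Completing the square in the dual block gives
    ||(a, b)||_{M_k}^2 >= ||a||^2 / tau_k - sigma_k ||A a||^2, and symmetrically in the
    primal block.  Under (C1), the Rayleigh bound ||A a||^2 <= rho(A^T A) ||a||^2 makes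
    this nonnegative for every k >= 1, so M_k is positive semidefinite from then on.
    Under (C2), x_{k+1} and x* both lie in X (resp. y_{k+1} and y* in Y), so if that
    set is bounded, the right-hand side is bounded below uniformly in k by (A). *)
From HB Require Import structures.
From mathcomp Require Import all_boot all_order all_algebra.
From mathcomp Require Import boolp classical_sets reals.
From mathcomp Require Import ring lra.
Set Implicit Arguments. Unset Strict Implicit. Unset Printing Implicit Defensive.
Import Order.TTheory GRing.Theory Num.Theory.
Local Open Scope ring_scope.
Local Open Scope classical_set_scope.

Section DotProduct.
Variable R : realType.

Definition dot (n : nat) (u v : 'cV[R]_n) : R := (u^T *m v) 0 0.

Lemma dotE n (u v : 'cV[R]_n) : dot u v = \sum_i u i 0 * v i 0.
Proof. by rewrite /dot mxE; apply: eq_bigr => i _; rewrite mxE. Qed.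

Lemma sqnormE n (u : 'cV[R]_n) : sqnorm u = dot u u.
Proof. by rewrite dotE /sqnorm; apply: eq_bigr => i _; rewrite expr2. Qed.

Lemma dotC n (u v : 'cV[R]_n) : dot u v = dot v u.
Proof. by rewrite !dotE; apply: eq_bigr => i _; rewrite mulrC. Qed.

Lemma dotDl n (u v w : 'cV[R]_n) : dot (u + v) w = dot u w + dot v w.
Proof. by rewrite !dotE -big_split; apply: eq_bigr => i _; rewrite mxE mulrDl. Qed.

Lemma dotDr n (u v w : 'cV[R]_n) : dot w (u + v) = dot w u + dot w v.
Proof. by rewrite dotC dotDl !(dotC w). Qed.

Lemma dotZl n a (u w : 'cV[R]_n) : dot (a *: u) w = a * dot u w.
Proof. by rewrite !dotE mulr_sumr; apply: eq_bigr => i _; rewrite mxE mulrA. Qed.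

Lemma dotZr n a (u w : 'cV[R]_n) : dot w (a *: u) = a * dot w u.
Proof. by rewrite dotC dotZl dotC. Qed.

Lemma dotNl n (u w : 'cV[R]_n) : dot (- u) w = - dot u w.
Proof. by rewrite -scaleN1r dotZl mulN1r. Qed.

Lemma dotNr n (u w : 'cV[R]_n) : dot w (- u) = - dot w u.
Proof. by rewrite dotC dotNl dotC. Qed.

Lemma dotBl n (u v w : 'cV[R]_n) : dot (u - v) w = dot u w - dot v w.
Proof. by rewrite dotDl dotNl. Qed.

Lemma dotBr n (u v w : 'cV[R]_n) : dot w (u - v) = dot w u - dot w v.
Proof. by rewrite dotDr dotNr. Qed.

Lemma dot0l n (w : 'cV[R]_n) : dot 0 w = 0.
Proof. by rewrite dotE big1 // => i _; rewrite mxE mul0r. Qed.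

Lemma dotxx_ge0 n (u : 'cV[R]_n) : 0 <= dot u u.
Proof. by rewrite dotE sumr_ge0 // => i _; rewrite -expr2 sqr_ge0. Qed.

Lemma sqr_coord_le_dotxx n (u : 'cV[R]_n) i : u i 0 ^+ 2 <= dot u u.
Proof.
rewrite dotE (bigD1 i) //= -expr2 lerDl.
by apply: sumr_ge0 => j _; rewrite -expr2 sqr_ge0.
Qed.

Lemma dotxx_gt0 n (u : 'cV[R]_n) : u != 0 -> 0 < dot u u.
Proof.
move=> u_neq0; have [i ui_neq0] : exists i, u i 0 != 0.
  apply/not_existsP => u0; move/eqP: u_neq0; apply; apply/matrixP => i j.
  by rewrite (ord1 j) mxE; apply/eqP; apply/negP => /negP; apply: u0.
apply: lt_le_trans (sqr_coord_le_dotxx u i).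
by rewrite exprn_even_gt0 // ui_neq0 orbT.
Qed.

Lemma dot_mulmxr n p (N : 'M[R]_(p, n)) u v : dot u (N *m v) = dot (N^T *m u) v.
Proof. by rewrite /dot trmx_mul trmxK mulmxA. Qed.

Lemma dot_mulmx_sym n (S : 'M[R]_n) u v : S^T = S -> dot u (S *m v) = dot v (S *m u).
Proof. by move=> symS; rewrite dot_mulmxr symS dotC. Qed.

Lemma dotxx_mulmx n p (N : 'M[R]_(p, n)) u :
  dot (N *m u) (N *m u) = dot u ((N^T *m N) *m u).
Proof. by rewrite dot_mulmxr dotC mulmxA. Qed.

Lemma dotxx_sub_le n (u v : 'cV[R]_n) :
  dot (u - v) (u - v) <= 2 * dot u u + 2 * dot v v.
Proof.
have := dotxx_ge0 (u + v).
by rewrite !dotBl !dotBr !dotDl !dotDr (dotC v u); lra.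
Qed.

End DotProduct.

Section RayleighBound.
Variable R : realType.

Definition abs_entry_sum n (M : 'M[R]_n) : R := \sum_i \sum_j `|M i j|.

Lemma abs_entry_sum_ge0 n (M : 'M[R]_n) : 0 <= abs_entry_sum M.
Proof. by apply: sumr_ge0 => i _; apply: sumr_ge0. Qed.

Lemma dot_mulmx_le_abs_entry_sum n (M : 'M[R]_n) u :
  dot u (M *m u) <= abs_entry_sum M * dot u u.
Proof.
have -> : dot u (M *m u) = \sum_i \sum_j u i 0 * M i j * u j 0.
  rewrite dotE; apply: eq_bigr => i _; rewrite mxE mulr_sumr.
  by apply: eq_bigr => j _; rewrite mulrA.
rewrite /abs_entry_sum mulr_suml; apply: ler_sum => i _; rewrite mulr_suml.
apply: ler_sum => j _.
have := sqr_coord_le_dotxx u i; have := sqr_coord_le_dotxx u j.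
rewrite -(real_normK (num_real (u i 0))) -(real_normK (num_real (u j 0))).
have : u i 0 * M i j * u j 0 <= `|M i j| * (`|u i 0| * `|u j 0|).
  by apply: le_trans (ler_norm _) _; rewrite !normrM mulrAC mulrC.
move: `|u i 0| `|u j 0| (normr_ge0 (M i j)) => a b m_ge0 le_uMu ha hb.
apply: le_trans le_uMu _; apply: ler_wpM2l => //.
(* 2ab <= a^2 + b^2 <= 2 |u|^2 *)
by have := sqr_ge0 (a - b); rewrite sqrrB; lra.
Qed.

Lemma eigenvalue_norm_le n (S : 'M[R]_n) a : S^T = S -> eigenvalue S a ->
  `|a| <= abs_entry_sum S + abs_entry_sum (- S).
Proof.
move=> symS /eigenvalueP [v Sv v_neq0].
set w := v^T.
have w_neq0 : w != 0 by apply: contra v_neq0 => /eqP w0; rewrite -[v]trmxK -/w w0 trmx0.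
have Sw : S *m w = a *: w by rewrite /w -{1}symS -trmx_mul Sv linearZ.
have w_gt0 := dotxx_gt0 w_neq0.
have := dot_mulmx_le_abs_entry_sum S w; rewrite Sw dotZr ler_pM2r // => le_a.
have := dot_mulmx_le_abs_entry_sum (- S) w.
rewrite mulNmx Sw dotNr dotZr -mulNr ler_pM2r // => le_Na.
by have := abs_entry_sum_ge0 S; have := abs_entry_sum_ge0 (- S); case: ler0P; lra.
Qed.

Lemma eigenvalue_le_specrad n (S : 'M[R]_n) a : S^T = S -> eigenvalue S a ->
  `|a| <= specrad S.
Proof.
move=> symS eig_a; apply: sup_upper_bound; last by exists a.
split; first by exists `|a|, a.
exists (abs_entry_sum S + abs_entry_sum (- S)) => _ [b [eig_b ->]].
exact: eigenvalue_norm_le.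
Qed.

Lemma psd_dotxx_mulmx_le n (T : 'M[R]_n) v :
  T^T = T -> (forall u, 0 <= dot u (T *m u)) ->
  dot (T *m v) (T *m v) <= (abs_entry_sum T + 1) * dot v (T *m v).
Proof.
move=> symT psdT.
have Tv_sym := dot_mulmx_sym v (T *m v) symT.
set w := T *m v in Tv_sym *; set G := abs_entry_sum T + 1.
have G_gt0 : 0 < G by rewrite ltr_wpDl ?abs_entry_sum_ge0.
have le_wTw : dot w (T *m w) <= G * dot w w.
  apply: le_trans (dot_mulmx_le_abs_entry_sum T w) _.
  by apply: ler_wpM2r; [exact: dotxx_ge0 | rewrite /G lerDl].
set g := G^-1.
have gG : g * G = 1 by rewrite mulVf ?gt_eqF.
have g_gt0 : 0 < g by rewrite invr_gt0.
have := psdT (v - g *: w).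
rewrite mulmxBr -scalemxAr dotBl !dotBr !dotZl !dotZr Tv_sym.
have le_gwTw : g * (g * dot w (T *m w)) <= g * dot w w.
  apply: ler_wpM2l; first exact: ltW.
  by rewrite -[dot w w]mul1r -gG -mulrA; apply: ler_wpM2l; first exact: ltW.
move=> le0; have le_gww : g * dot w w <= dot v w by lra.
have -> : dot w w = G * (g * dot w w) by rewrite mulrA (mulrC G) gG mul1r.
by apply: ler_wpM2l; first exact: ltW.
Qed.

Lemma unitmx_dotxx_le n (N : 'M[R]_n) : N \in unitmx ->
  exists2 K, 0 < K & forall u, dot u u <= K * dot (N *m u) (N *m u).
Proof.
move=> unitN; set Ni := invmx N.
exists (abs_entry_sum (Ni^T *m Ni) + 1); first by rewrite ltr_wpDl ?abs_entry_sum_ge0.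
move=> u; rewrite -{1 2}[u](mulKmx unitN) -/Ni (dotxx_mulmx Ni).
apply: le_trans (dot_mulmx_le_abs_entry_sum _ _) _.
by apply: ler_wpM2r; [exact: dotxx_ge0 | rewrite lerDl].
Qed.

Lemma psd_coercive n (T : 'M[R]_n) K :
  T^T = T -> (forall u, 0 <= dot u (T *m u)) ->
  0 < K -> (forall u, dot u u <= K * dot (T *m u) (T *m u)) ->
  exists2 eps, 0 < eps & forall u, eps * dot u u <= dot u (T *m u).
Proof.
move=> symT psdT K_gt0 injT; set G := abs_entry_sum T + 1.
have G_gt0 : 0 < G by rewrite ltr_wpDl ?abs_entry_sum_ge0.
exists (K * G)^-1; first by rewrite invr_gt0 mulr_gt0.
move=> u; rewrite mulrC ler_pdivrMr ?mulr_gt0 // mulrC -mulrA.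
apply: le_trans (injT u) _; apply: ler_wpM2l; first exact: ltW.
exact: psd_dotxx_mulmx_le.
Qed.

Definition rayleigh_sup n (S : 'M[R]_n) : R :=
  sup [set q : R | exists2 u : 'cV[R]_n, u != 0 & q = dot u (S *m u) / dot u u].

Lemma dot_mulmx_le_rayleigh_sup n (S : 'M[R]_n) u :
  dot u (S *m u) <= rayleigh_sup S * dot u u.
Proof.
have [->|u_neq0] := eqVneq u 0; first by rewrite !dot0l mulr0.
rewrite -ler_pdivrMr ?dotxx_gt0 //; apply: sup_upper_bound; last by exists u.
split; first by exists (dot u (S *m u) / dot u u), u.
exists (abs_entry_sum S) => _ [v v_neq0 ->].
by rewrite ler_pdivrMr ?dotxx_gt0 //; exact: dot_mulmx_le_abs_entry_sum.
Qed.

(* If rayleigh_sup S - S were invertible, it would be coercive, and lowering the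
   supremum by the coercivity constant would give a smaller upper bound. *)
Lemma rayleigh_sup_eigenvalue n (S : 'M[R]_n) (v : 'cV[R]_n) : S^T = S -> v != 0 ->
  eigenvalue S (rayleigh_sup S).
Proof.
move=> symS v_neq0; set mu := rayleigh_sup S.
case/boolP: (eigenvalue S mu) => // not_eig; exfalso.
have unitN : S - mu%:M \in unitmx.
  by rewrite -row_free_unit -kermx_eq0; apply/negPn.
set T := mu%:M - S.
have TE u : T *m u = - ((S - mu%:M) *m u) by rewrite /T -mulNmx opprB.
have symT : T^T = T by rewrite /T linearB /= symS tr_scalar_mx.
have psdT u : 0 <= dot u (T *m u).
  by rewrite mulmxBl mul_scalar_mx dotBr dotZr subr_ge0 dot_mulmx_le_rayleigh_sup.
have [K K_gt0 injN] := unitmx_dotxx_le unitN.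
have [eps eps_gt0 coerT] : exists2 eps, 0 < eps & forall u, eps * dot u u <= dot u (T *m u).
  by apply: (psd_coercive symT psdT K_gt0) => u; rewrite TE dotNl dotNr opprK.
have : mu <= mu - eps.
  apply: ge_sup; first by exists (dot v (S *m v) / dot v v), v.
  move=> _ [u u_neq0 ->]; rewrite ler_pdivrMr ?dotxx_gt0 //.
  by have := coerT u; rewrite mulmxBl mul_scalar_mx dotBr dotZr mulrBl; lra.
by lra.
Qed.

Lemma dot_mulmx_le_specrad n (S : 'M[R]_n) v : S^T = S ->
  dot v (S *m v) <= specrad S * dot v v.
Proof.
move=> symS; have [->|v_neq0] := eqVneq v 0; first by rewrite !dot0l mulr0.
apply: le_trans (dot_mulmx_le_rayleigh_sup S v) _.
apply: ler_wpM2r; first exact: dotxx_ge0.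
apply: le_trans (ler_norm _) _.
exact/eigenvalue_le_specrad/(rayleigh_sup_eigenvalue symS v_neq0).
Qed.

End RayleighBound.

Section PDHGForm.
Variable R : realType.

Lemma qform_MkE m n (A : 'M[R]_(m, n)) t s a b :
  qform (Mk A t s) (col_mx a b) =
  t^-1 * dot a a + s^-1 * dot b b - 2 * dot b (A *m a).
Proof.
rewrite /qform /Mk tr_col_mx mul_row_block mul_row_col.
rewrite !mulmxDl !mul_mx_scalar !mulmxN -!scalemxAl -trmx_mul !mulNmx -mulmxA.
have mx00D (P Q : 'M[R]_1) : (P + Q) 0 0 = P 0 0 + Q 0 0 by rewrite mxE.
have mx00N (P : 'M[R]_1) : (- P) 0 0 = - P 0 0 by rewrite mxE.
have mx00Z c (P : 'M[R]_1) : (c *: P) 0 0 = c * P 0 0 by rewrite mxE.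
rewrite !mx00D !mx00N !mx00Z -/(dot a a) -/(dot b b).
rewrite -/(dot (A *m a) b) -/(dot b (A *m a)) dotC.
ring.
Qed.

Lemma qform_Mk_trmx m n (A : 'M[R]_(m, n)) t s a b :
  qform (Mk A t s) (col_mx a b) = qform (Mk A^T s t) (col_mx b a).
Proof. by rewrite !qform_MkE dot_mulmxr (dotC (A^T *m b)); ring. Qed.

(* Completing the square: the form equals this bound plus ||b - s A a||^2 / s. *)
Lemma qform_Mk_ge m n (A : 'M[R]_(m, n)) t s a b : 0 < s ->
  t^-1 * dot a a - s * dot (A *m a) (A *m a) <= qform (Mk A t s) (col_mx a b).
Proof.
move=> s_gt0; rewrite qform_MkE.
have si_ge0 : 0 <= s^-1 by rewrite invr_ge0 ltW.
have := mulr_ge0 si_ge0 (dotxx_ge0 (b - s *: (A *m a))).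
rewrite !dotBl !dotBr !dotZl !dotZr (dotC (A *m a) b).
have -> : forall r x q, s^-1 * (r - s * x - (s * x - s * (s * q))) =
                        s^-1 * r - 2 * x + s * q.
  by move=> r x q; field; rewrite gt_eqF.
lra.
Qed.

Lemma qform_Mk_ge0 m n (A : 'M[R]_(m, n)) t s a b : 0 < t -> 0 < s ->
  t * s * specrad (A^T *m A) <= 1 -> 0 <= qform (Mk A t s) (col_mx a b).
Proof.
move=> t_gt0 s_gt0 ts_rho_le1; apply: le_trans _ (qform_Mk_ge A t a b s_gt0).
have symAA : (A^T *m A)^T = A^T *m A by rewrite trmx_mul trmxK.
have := dot_mulmx_le_specrad a symAA; rewrite -dotxx_mulmx.
set q := dot (A *m a) _; set p := dot a a; set rho := specrad _ => le_q.
have p_ge0 : 0 <= p := dotxx_ge0 a.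
have le_tsq : t * s * q <= p.
  apply: le_trans (_ : t * s * (rho * p) <= p).
    by apply: ler_wpM2l; first by rewrite ltW ?mulr_gt0.
  by rewrite mulrA -[leRHS]mul1r ler_wpM2r.
have -> : t^-1 * p - s * q = t^-1 * (p - t * s * q) by field; rewrite gt_eqF.
by rewrite mulr_ge0 ?subr_ge0 // invr_ge0 ltW.
Qed.

Lemma qform_Mk_ge_bounded m n (A : 'M[R]_(m, n)) t s a b B D :
  0 < t -> 0 < s -> s <= B -> dot a a <= D ->
  - (B * (abs_entry_sum (A^T *m A) * D)) <= qform (Mk A t s) (col_mx a b).
Proof.
move=> t_gt0 s_gt0 s_leB a_leD; apply: le_trans _ (qform_Mk_ge A t a b s_gt0).
have le_Aa : dot (A *m a) (A *m a) <= abs_entry_sum (A^T *m A) * D.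
  rewrite dotxx_mulmx; apply: le_trans (dot_mulmx_le_abs_entry_sum _ _) _.
  by apply: ler_wpM2l; first exact: abs_entry_sum_ge0.
have Aa_ge0 := dotxx_ge0 (A *m a).
have : 0 <= t^-1 * dot a a by rewrite mulr_ge0 ?dotxx_ge0 // invr_ge0 ltW.
have : s * dot (A *m a) (A *m a) <= B * dot (A *m a) (A *m a) by apply: ler_wpM2r.
have : B * dot (A *m a) (A *m a) <= B * (abs_entry_sum (A^T *m A) * D).
  by apply: ler_wpM2l => //; apply: le_trans s_leB; apply: ltW.
lra.
Qed.

End PDHGForm.

Lemma bounded_set_dotxx_sub (R : realType) n (X : set 'cV[R]_n) :
  bounded_set X -> exists D, forall u v, X u -> X v -> dot (u - v) (u - v) <= D.
Proof.
move=> [B leB]; exists (4 * B) => u v Xu Xv.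
have := leB u Xu; have := leB v Xv; rewrite !sqnormE.
by have := dotxx_sub_le u v; lra.
Qed.

Unset Implicit Arguments.

Theorem mainTheorem4 (R : realType) (m n : nat) (A : 'M[R]_(m, n))
    (f : 'cV[R]_n -> R) (g : 'cV[R]_m -> R)
    (X : set 'cV[R]_n) (Y : set 'cV[R]_m)
    (tau sigma : nat -> R) (x : nat -> 'cV[R]_n) (y : nat -> 'cV[R]_m)
    (xs : 'cV[R]_n) (ys : 'cV[R]_m) :
  convex_fun f -> convex_fun g -> convex_set X -> convex_set Y ->
  (forall k, 0 < tau k) -> (forall k, 0 < sigma k) ->
  (forall k, is_prox_min f X (tau k) (x k - tau k *: (A^T *m y k)) (x k.+1)) ->
  (forall k, is_prox_min g Y (sigma k)
               (y k + sigma k *: (A *m (2%:R *: x k.+1 - x k))) (y k.+1)) ->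
  subdiff_ind f X xs (- (A^T *m ys)) ->
  subdiff_ind g Y ys (A *m xs) ->
  (exists B : R, forall k, tau k <= B /\ sigma k <= B) ->
  (exists Cphi : R, forall K, \sum_(k < K) phik tau sigma k < Cphi) ->
  ((exists L : R, (forall k, (0 < k)%N -> tau k * sigma k < L) /\
                  L * specrad (A^T *m A) < 1)
   \/
   ((bounded_set X \/ bounded_set Y) /\
    exists c : R, 0 < c /\ c < 1 /\
      forall k, (0 < k)%N ->
        qform (Mk A (tau k) (sigma k)) (col_mx (x k.+1 - x k) (y k.+1 - y k))
        >= c * qform (Hk m n (tau k) (sigma k))
                     (col_mx (x k.+1 - x k) (y k.+1 - y k)))) ->
  exists CL : R, forall k,
    qform (Mk A (tau k) (sigma k)) (col_mx (x k.+1 - xs) (y k.+1 - ys)) >= CL.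
Proof.
move=> _ _ _ _ tau_gt0 sigma_gt0 x_prox y_prox [Xxs _] [Yys _] [B leB] _.
case=> [[L [ltL LrhoL]] | [[/bounded_set_dotxx_sub [D leD] | /bounded_set_dotxx_sub [D leD]] _]].
- exists (Num.min 0 (qform (Mk A (tau 0) (sigma 0)) (col_mx (x 1 - xs) (y 1 - ys)))).
  case=> [|k]; rewrite ge_min ?lexx ?orbT //; apply/orP; left.
  apply: qform_Mk_ge0 => //.
  have ts_gt0 := mulr_gt0 (tau_gt0 k.+1) (sigma_gt0 k.+1).
  by have := ltL k.+1 isT; nra.
- exists (- (B * (abs_entry_sum (A^T *m A) * D))) => k.
  apply: qform_Mk_ge_bounded (leB k).2 (leD _ _ (x_prox k).1 Xxs) => //.
- exists (- (B * (abs_entry_sum (A^T^T *m A^T) * D))) => k.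
  rewrite qform_Mk_trmx.
  by apply: qform_Mk_ge_bounded (leB k).1 (leD _ _ (y_prox k).1 Yys).
Qed.
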